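(* In the setting below, for $\ell\ge1$ define $q_\ell:D_\ell(G^* )\otimes\bigwedge^{n+\ell}F\to\bigwedge^\ell U$ by $$g_1^{*(\alpha_1)}\cdots g_n^{*(\alpha_n)}\otimes f_{\tau_1}\wedge\cdots\wedge f_{\tau_\ell}\wedge f_\sigma\ \mapsto\ \sum_{L\in\mathcal L_{\alpha,\tau}}e_{L_1}\wedge\cdots\wedge e_{L_\ell}$$ for every $\tau=(\tau_1<\cdots<\tau_\ell)$ with $\tau\cap\sigma=\varnothing$ and $|\alpha|=\ell$, and sending every basis element $g^{*(\alpha)}\otimes f_\rho$ with $\rho\not\supseteq\sigma$ to $0$. Then for every $\ell\ge2$, $m_\ell\circ q_\ell=q_{\ell-1}\circ\partial_{\ell+1}$, where $\partial_{\ell+1}:D_\ell(G^* )\otimes\bigwedge^{n+\ell}F\to D_{\ell-1}(G^* )\otimes\bigwedge^{n+\ell-1}F$ is the Eagon–Northcott differential and $m_\ell:\bigwedge^\ell U\to\bigwedge^{\ell-1}U$ is the Koszul differential.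
   Context: Setting: $R=k[x_{ij}\mid1\le i\le n,1\le j\le m]$ over a field $k$, $n\le m$, $M=(x_{ij})$ generic, viewed as $F\to G$ with bases $f_1,\dots,f_m$ of $F$, $g_1,\dots,g_n$ of $G$, dual basis $g_i^*$ of $G^*$. $D_\ell(G^* )$ is the $\ell$th divided power, with basis $g^{*(\alpha)}=g_1^{*(\alpha_1)}\cdots g_n^{*(\alpha_n)}$, $|\alpha|=\ell$. For $\rho=(\rho_1<\dots<\rho_p)$, $f_\rho=f_{\rho_1}\wedge\cdots\wedge f_{\rho_p}$. Fix $\sigma=(\sigma_1<\dots<\sigma_n)$. The Eagon–Northcott complex $E_\bullet$ has $E_0=R$, $E_1=\bigwedge^nF$, $E_{\ell+1}=D_\ell(G^* )\otimes\bigwedge^{n+\ell}F$; $\partial_1(f_\rho)=\det$ of the columns $\rho$ of $M$, and for $\ell\ge1$, $\partial_{\ell+1}(g^{*(\alpha)}\otimes f_{\rho_1}\wedge\cdots\wedge f_{\rho_p})=\sum_{i:\alpha_i>0}\sum_{s=1}^p(-1)^{s+1}x_{i\rho_s}\,g^{*(\alpha-\varepsilon_i)}\otimes f_{\rho_1}\wedge\cdots\widehat{f_{\rho_s}}\cdots\wedge f_{\rho_p}$ (with $D_0(G^* )=R$). $U$ is free with basis $e_{ij}$, $1\le i\le n$, $j\notin\sigma$; for a pair $L=(i,j)$, $e_L=e_{ij}$; $m_\ell(e_{L_1}\wedge\cdots\wedge e_{L_\ell})=\sum_s(-1)^{s+1}x_{L_s}e_{L_1}\wedge\cdots\widehat{e_{L_s}}\cdots\wedge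 e_{L_\ell}$ where $x_{(i,j)}=x_{ij}$. For $\tau=(\tau_1<\dots<\tau_\ell)$ and $\alpha\in\mathbb Z^n_{\ge0}$, $\mathcal L_{\alpha,\tau}$ is the set of sets $\{(r_1,\tau_1),\dots,(r_\ell,\tau_\ell)\}$ with $r_s\in\{i:\alpha_i\ne0\}$ and $|\{s: r_s=j\}|=\alpha_j$ for all $j$; its elements are written $L=(L_1,\dots,L_\ell)$ with $L_s=(r_s,\tau_s)$ ordered by $\tau$. *)

From HB Require Import structures.
From mathcomp Require Import all_boot all_order all_algebra.
From mathcomp Require Import mpoly.
Set Implicit Arguments. Unset Strict Implicit. Unset Printing Implicit Defensive.
Import Order.TTheory GRing.Theory.
Local Open Scope ring_scope.

(* Free modules with a finite basis B are represented by coordinate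
   functions B -> R; an R-linear map between free modules with bases B, C
   is given by its coefficient matrix M : B -> C -> R, where M b c is the
   coefficient of the basis vector c in the image of the basis vector b. *)
Definition lin (R : comNzRingType) (B C : finType) (M : B -> C -> R)
  (v : B -> R) : C -> R := fun c => \sum_(b : B) v b * M b c.

Section Complexes.
Variables (n m : nat).

(* Basis of D_l(G^* ) (x) /\^{n+l} F : pairs (alpha, rho), alpha an exponent
   vector with |alpha| = l (entries are <= l), rho an (n+l)-subset of the
   columns, f_rho = f_{rho_1} /\ ... /\ f_{rho_p} with rho increasing. *)
Definition ENbasis (l : nat) :=
  {p : {ffun 'I_n -> 'I_l.+1} * {set 'I_m} |
     ((\sum_(i < n) (p.1 i : nat))%N == l) && (#|p.2| == n + l)%N}.

(* The Eagon--Northcott differential d_{l+1} : E_{l+1} -> E_l (l >= 1):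
   g^(alpha) (x) f_rho |-> sum_{i : alpha_i > 0} sum_s (-1)^(s+1) x_{i rho_s}
   g^(alpha - eps_i) (x) f_{rho \ rho_s};  (-1)^(s+1) = (-1)^#{r in rho | r < rho_s}. *)
Definition ENdiff (R : comNzRingType) (x : 'I_n -> 'I_m -> R) (l : nat)
  : ENbasis l -> ENbasis l.-1 -> R :=
  fun b c =>
    let a := (val b).1 in let rho := (val b).2 in
    let be := (val c).1 in let rho' := (val c).2 in
    \sum_(i < n) \sum_(j in rho)
      if [&& (0 < a i)%N,
             [forall k, (be k : nat) == (a k - (k == i))%N]
           & rho' == rho :\ j]
      then (-1) ^+ #|[set r in rho | (r < j)%N]| * x i j
      else 0.

(* U has basis e_ij, j notin sigma. Basis of /\^l U: l-subsets S of these
   pairs, e_S being the wedge of its elements listed in the (fixed)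
   column-major order below. *)
Definition pairlt (p q : 'I_n * 'I_m) : bool :=
  (p.2 < q.2)%N || ((p.2 == q.2) && (p.1 < q.1)%N).

Definition KUbasis (sigma : {set 'I_m}) (l : nat) :=
  {S : {set 'I_n * 'I_m} | (#|S| == l)%N && [forall p in S, p.2 \notin sigma]}.

Definition koszul (R : comNzRingType) (x : 'I_n -> 'I_m -> R)
  (sigma : {set 'I_m}) (l : nat) : KUbasis sigma l -> KUbasis sigma l.-1 -> R :=
  fun S S' =>
    \sum_(p in val S)
      if val S' == val S :\ p
      then (-1) ^+ #|[set q in val S | pairlt q p]| * x p.1 p.2
      else 0.

(* Number of inversions of a sequence of column indices; for distinct
   entries, f_{s_1} /\ ... /\ f_{s_p} = (-1)^(inversions s) f_{sorted s}. *)
Fixpoint inversions (s : seq 'I_m) : nat :=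
  if s is a :: s' then (count (fun b : 'I_m => (b < a)%N) s' + inversions s')%N
  else 0%N.

Definition wedge_sign (R : comNzRingType) (s : seq 'I_m) : R :=
  (-1) ^+ inversions s.

(* Membership of S in L_{alpha,tau}: S = {(r_s, tau_s)} with r_s in supp alpha
   and |{s : r_s = i}| = alpha_i for all i (r indexed by the columns of tau). *)
Definition in_L (l : nat) (a : {ffun 'I_n -> 'I_l.+1}) (tau : {set 'I_m})
  (S : {set 'I_n * 'I_m}) : bool :=
  [exists r : {ffun 'I_m -> 'I_n},
    [&& S == [set (r j, j) | j in tau],
        [forall j in tau, (a (r j) : nat) != 0%N]
      & [forall i, #|[set j in tau | r j == i]| == (a i : nat)]]].

(* On the sorted basis vector f_rho (rho = tau u sigma) we have
   f_rho = eps * (f_tau /\ f_sigma) with eps = wedge_sign (tau ++ sigma) = eps^-1. *)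
Definition qmap (R : comNzRingType) (sigma : {set 'I_m}) (l : nat)
  : ENbasis l -> KUbasis sigma l -> R :=
  fun b S =>
    let a := (val b).1 in let rho := (val b).2 in
    if sigma \subset rho then
      wedge_sign R (enum (rho :\: sigma) ++ enum sigma)
        * (in_L a (rho :\: sigma) (val S))%:R
    else 0.

End Complexes.

Definition xgen (k : fieldType) (n m : nat) : 'I_n -> 'I_m -> {mpoly k[n * m]} :=
  fun i j => 'X_(mxvec_index i j).

From HB Require Import structures.
From mathcomp Require Import all_boot all_order all_algebra.
From mathcomp Require Import mpoly.
From mathcomp Require Import zify ring.
(* All maps are given by their matrices on the natural bases, so the claim
   m_l o q_l = q_{l-1} o d_{l+1} reduces, by associativity of matrix products
   ([lin_comp]), to an identity of matrix entries at a basis vector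
   g^(alpha) (x) f_rho of D_l(G^* ) (x) /\^{n+l} F and a basis vector e_S of
   /\^{l-1} U ([commute_raw]).  If sigma is not contained in rho both sides
   vanish.  Otherwise write rho = tau u sigma, and let eps be the sign turning
   f_rho into f_tau /\ f_sigma.  Both sides are then computed as
     eps * sum_{i, j in tau, alpha_i > 0}
             (-1)^#{u in tau | u < j} x_ij [S in L_{alpha - e_i, tau \ j}]:
   - on the Koszul side, applying m_l to sum_{L in L_{alpha,tau}} e_L removes
     one pair (i, j) from each L; the sets L \ (i, j) are exactly the members
     of L_{alpha - e_i, tau \ j} ([in_Lnat_setU1], [koszul_Lsum]);
   - on the Eagon--Northcott side, d_{l+1} removes a column j of rho and
     lowers alpha_i; the terms with j in sigma are killed by q_{l-1}, and for
     j in tau the sign (-1)^#{r in rho | r < j} of d_{l+1} times the sign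
     eps' of f_{rho \ j} is eps times the Koszul sign (-1)^#{u in tau | u < j}
     ([wedge_sign_setD1]). *)

Set Implicit Arguments. Unset Strict Implicit. Unset Printing Implicit Defensive.
Import Order.TTheory GRing.Theory.
Local Open Scope ring_scope.

Lemma card_sep_setD1 (T : finType) (tau : {set T}) (P : pred T) (t : T) :
  t \in tau ->
  #|[set u in tau | P u]| = (P t + #|[set u in tau :\ t | P u]|)%N.
Proof.
move=> t_tau; rewrite (cardsD1 t) !inE t_tau /=; congr addn.
by apply: eq_card => u; rewrite !inE andbA.
Qed.

Lemma card_sep_subset (T : finType) (A B : {set T}) (P : pred T) : B \subset A ->
  #|[set u in A | P u]| = (#|[set u in A :\: B | P u]| + #|[set u in B | P u]|)%N.
Proof.
move=> sBA; rewrite -(cardsID B) addnC; congr addn; apply: eq_card => u; rewrite !inE.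
  by rewrite andbA.
by case: (boolP (u \in B)) => uB; rewrite ?andbT ?andbF //= (subsetP sBA).
Qed.

Lemma sum_sig (R : nmodType) (T : finType) (P : pred T) (F : T -> R) :
  \sum_(u : {x : T | P x}) F (val u) = \sum_(x | P x) F x.
Proof. by rewrite (big_sub (fun x => P x)). Qed.

Lemma lin_comp (R : comNzRingType) (A B C : finType) (M : A -> B -> R) (N : B -> C -> R)
    (v : A -> R) (c : C) :
  lin N (lin M v) c = lin (fun a c => \sum_b M a b * N b c) v c.
Proof.
rewrite /lin; under eq_bigr do rewrite big_distrl; rewrite exchange_big /=.
by apply: eq_bigr => a _; rewrite big_distrr; apply: eq_bigr => b _; rewrite /= mulrA.
Qed.

Section WedgeSign.
Variable m : nat.

Lemma inversions_cat (s t : seq 'I_m) :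
  inversions (s ++ t) = (inversions s + inversions t +
     \sum_(a <- s) count (fun b : 'I_m => (b < a)%N) t)%N.
Proof.
elim: s => [|a s IH] /=; first by rewrite big_nil addn0.
by rewrite big_cons count_cat IH; lia.
Qed.

Lemma inversions_sorted (s : seq 'I_m) :
  sorted (fun a b : 'I_m => (a < b)%N) s -> inversions s = 0%N.
Proof.
elim: s => [|a s IH] //= s_sorted.
rewrite IH ?(path_sorted s_sorted) // addn0 -(count_pred0 s).
apply/eq_in_count => b b_s /=; rewrite ltnNge ltnW //.
have /allP := order_path_min (fun _ _ _ => @ltn_trans _ _ _) s_sorted.
exact.
Qed.

Lemma enum_set_sorted (A : {set 'I_m}) :
  sorted (fun a b : 'I_m => (a < b)%N) (enum A).
Proof.
have: sorted ltn (map val (enum A)).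
  rewrite -[enum _](eq_filter (mem_enum _)).
  rewrite -(eq_filter (mem_map val_inj _)) -filter_map.
  by rewrite (sorted_filter ltn_trans) // unlock val_ord_enum iota_ltn_sorted.
by rewrite sorted_map.
Qed.

(* Sorting f_A /\ f_B: each a in A passes the elements of B below it. *)
Lemma inversions_enum_cat (A B : {set 'I_m}) :
  inversions (enum A ++ enum B) = (\sum_(a in A) #|[set b in B | (b < a)%N]|)%N.
Proof.
rewrite inversions_cat !inversions_sorted ?enum_set_sorted // add0n big_enum.
apply: eq_bigr => a _; rewrite -sum1_count big_enum_cond -sum1_card.
by apply: eq_bigl => b; rewrite !inE.
Qed.

Lemma wedge_sign_setD1 (R : comNzRingType) (A B : {set 'I_m}) (j : 'I_m) :
  j \in A ->
  wedge_sign R (enum A ++ enum B)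
  = (-1) ^+ #|[set b in B | (b < j)%N]| * wedge_sign R (enum (A :\ j) ++ enum B).
Proof.
by move=> jA; rewrite /wedge_sign !inversions_enum_cat (big_setD1 j jA) exprD.
Qed.

End WedgeSign.

Section LSets.
Variables (n m : nat).

(* Membership in L_{a,tau} for an exponent vector a with values in nat; the
   predicate in_L of the statement is its instance on bounded exponents. *)
Definition in_Lnat (a : 'I_n -> nat) (tau : {set 'I_m}) (S : {set 'I_n * 'I_m}) : bool :=
  [exists r : {ffun 'I_m -> 'I_n},
    [&& S == [set (r j, j) | j in tau],
        [forall j in tau, a (r j) != 0%N]
      & [forall i, #|[set j in tau | r j == i]| == a i]]].

Lemma in_Lnat_ext (a b : 'I_n -> nat) tau S : a =1 b -> in_Lnat a tau S = in_Lnat b tau S.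
Proof.
move=> eq_ab; apply: eq_existsb => r; congr [&& _, _ & _].
  by apply: eq_forallb => j; rewrite eq_ab.
by apply: eq_forallb => i; rewrite eq_ab.
Qed.

Lemma mem_graph (r : 'I_m -> 'I_n) (A : {set 'I_m}) (i : 'I_n) (j : 'I_m) :
  ((i, j) \in [set (r u, u) | u in A]) = (j \in A) && (i == r j).
Proof.
apply/imsetP/andP => [[u uA [-> ->]] | [jA /eqP ->]]; first by rewrite eqxx.
by exists j.
Qed.

Lemma in_Lnat_remove (a : 'I_n -> nat) (tau : {set 'I_m}) (S : {set 'I_n * 'I_m})
    (i : 'I_n) (j : 'I_m) :
  (i, j) \notin S -> in_Lnat a tau ((i, j) |: S) ->
  [&& j \in tau, (0 < a i)%N & in_Lnat (fun k => (a k - (k == i))%N) (tau :\ j) S].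
Proof.
move=> ijS /existsP [r /and3P [/eqP defS /forall_inP a_nz /forallP a_card]].
have : (i, j) \in [set (r u, u) | u in tau] by rewrite -defS setU11.
rewrite mem_graph => /andP [j_tau /eqP def_i]; subst i.
rewrite j_tau lt0n a_nz //=; apply/existsP; exists r; apply/and3P; split.
- rewrite -(setU1K ijS) defS; apply/eqP/setP => [[q1 q2]].
  rewrite !inE !mem_graph xpair_eqE.
  case: (eqVneq q2 j) => [-> | q2j] /=; rewrite ?in_setD1 ?eqxx ?q2j ?andbF //=.
  by case: (q1 == r j); rewrite /= ?andbF.
- apply/forall_inP => u; rewrite !inE => /andP [uj u_tau].
  case: (eqVneq (r u) (r j)) => [ruj | _] /=; last by rewrite subn0 a_nz.
  have : (1 < #|[set v in tau | r v == r j]|)%N.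
    apply: (@leq_trans #|[set u; j]|); first by rewrite cards2 uj.
    apply: subset_leq_card; apply/subsetP => v.
    by rewrite !inE => /orP [] /eqP ->; rewrite ?ruj eqxx ?u_tau ?j_tau.
  by rewrite (eqP (a_card (r j))) ruj /= -lt0n subn_gt0.
- apply/forallP => k; have := eqP (a_card k).
  rewrite (card_sep_setD1 _ j_tau) => <-; rewrite [k == r j]eq_sym.
  by case: (r j == k); rewrite /= ?add1n ?add0n ?subn1 ?subn0.
Qed.

Lemma in_Lnat_add (a : 'I_n -> nat) (tau : {set 'I_m}) (S : {set 'I_n * 'I_m})
    (i : 'I_n) (j : 'I_m) :
  j \in tau -> (0 < a i)%N -> in_Lnat (fun k => (a k - (k == i))%N) (tau :\ j) S ->
  ((i, j) \notin S) && in_Lnat a tau ((i, j) |: S).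
Proof.
move=> j_tau ai_pos /existsP [r /and3P [/eqP defS /forall_inP a_nz /forallP a_card]].
rewrite defS mem_graph !inE eqxx /=.
apply/existsP; exists [ffun u => if u == j then i else r u]; apply/and3P; split.
- apply/eqP/setP => [[q1 q2]]; rewrite in_setU1 !mem_graph !inE ffunE xpair_eqE.
  by case: (eqVneq q2 j) => [-> | q2j] /=; rewrite ?andbT ?andbF ?j_tau ?orbF.
- apply/forall_inP => u u_tau; rewrite ffunE.
  case: (eqVneq u j) => [_ | uj]; first by rewrite -lt0n.
  have := a_nz u; rewrite !inE uj u_tau => /(_ isT).
  by apply: contra => /eqP ->.
- apply/forallP => k; rewrite (card_sep_setD1 _ j_tau) ffunE eqxx.
  have -> : #|[set u in tau :\ j | [ffun u => if u == j then i else r u] u == k]|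
          = #|[set u in tau :\ j | r u == k]|.
    by apply: eq_card => u; rewrite !inE ffunE; case: (eqVneq u j).
  rewrite (eqP (a_card k)) eq_sym; case: (eqVneq k i) => [-> | _] /=.
    by rewrite add1n subn1 prednK.
  by rewrite subn0.
Qed.

Lemma in_Lnat_setU1 (a : 'I_n -> nat) (tau : {set 'I_m}) (S : {set 'I_n * 'I_m})
    (i : 'I_n) (j : 'I_m) :
  ((i, j) \notin S) && in_Lnat a tau ((i, j) |: S) =
  [&& j \in tau, (0 < a i)%N & in_Lnat (fun k => (a k - (k == i))%N) (tau :\ j) S].
Proof.
apply/idP/idP => [/andP [] | /and3P []]; [exact: in_Lnat_remove | exact: in_Lnat_add].
Qed.

(* In a member T of L_{a,tau}, the pairs preceding (i, j) in the column-major
   order are those of the columns of tau before j; this gives the Koszul sign. *)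
Lemma in_Lnat_sign (a : 'I_n -> nat) (tau : {set 'I_m}) (T : {set 'I_n * 'I_m})
    (i : 'I_n) (j : 'I_m) :
  in_Lnat a tau T -> (i, j) \in T ->
  #|[set q in T | pairlt q (i, j)]| = #|[set u in tau | (u < j)%N]|.
Proof.
case/existsP => r /and3P [/eqP -> _ _]; rewrite mem_graph => /andP [_ /eqP ->].
rewrite -(card_imset _ (f := fun u => (r u, u))); last by move=> u v [].
apply: eq_card => [[q1 q2]]; rewrite !inE !mem_graph !inE /pairlt /=.
case: (eqVneq q1 (r q2)) => [-> | ]; rewrite ?andbT ?andbF //.
by case: (eqVneq q2 j) => [-> | _]; rewrite ?ltnn //= ?orbF.
Qed.

Lemma in_Lnat_shape (a : 'I_n -> nat) (tau : {set 'I_m}) (T : {set 'I_n * 'I_m}) :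
  in_Lnat a tau T -> #|T| = #|tau| /\ {in T, forall p, p.2 \in tau}.
Proof.
case/existsP => r /and3P [/eqP -> _ _]; split.
  by rewrite card_imset // => u v [].
by move=> [p1 p2]; rewrite mem_graph => /andP [].
Qed.

End LSets.

(* The matrices of the statement read on raw index data, i.e. without the
   side conditions carried by the basis types ENbasis and KUbasis. *)
Section Entries.
Variables (R : comNzRingType) (n m : nat) (x : 'I_n -> 'I_m -> R) (sigma : {set 'I_m}).

Definition koszul_raw (T S : {set 'I_n * 'I_m}) : R :=
  \sum_(p in T) (if S == T :\ p
                 then (-1) ^+ #|[set q in T | pairlt q p]| * x p.1 p.2 else 0).

Definition qmap_raw l (b : {ffun 'I_n -> 'I_l.+1} * {set 'I_m}) (T : {set 'I_n * 'I_m}) : R :=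
  if sigma \subset b.2 then
    wedge_sign R (enum (b.2 :\: sigma) ++ enum sigma) * (in_L b.1 (b.2 :\: sigma) T)%:R
  else 0.

Definition ENdiff_raw l (b : {ffun 'I_n -> 'I_l.+1} * {set 'I_m})
  (c : {ffun 'I_n -> 'I_l.-1.+1} * {set 'I_m}) : R :=
  \sum_(i < n) \sum_(j in b.2)
      if [&& (0 < b.1 i)%N,
             [forall k, (c.1 k : nat) == (b.1 k - (k == i))%N]
           & c.2 == b.2 :\ j]
      then (-1) ^+ #|[set r in b.2 | (r < j)%N]| * x i j
      else 0.

Definition is_KUbasis l (T : {set 'I_n * 'I_m}) : bool :=
  (#|T| == l) && [forall p in T, p.2 \notin sigma].

Definition is_ENbasis l (b : {ffun 'I_n -> 'I_l.+1} * {set 'I_m}) : bool :=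
  ((\sum_(i < n) (b.1 i : nat))%N == l) && (#|b.2| == n + l)%N.

Lemma koszul_Lsum (a : 'I_n -> nat) (tau : {set 'I_m}) (S : {set 'I_n * 'I_m}) :
  \sum_T (in_Lnat a tau T)%:R * koszul_raw T S =
  \sum_i \sum_(j in tau)
    (if (0 < a i)%N && in_Lnat (fun k => (a k - (k == i))%N) (tau :\ j) S
     then (-1) ^+ #|[set u in tau | (u < j)%N]| * x i j else 0).
Proof.
transitivity (\sum_(T : {set 'I_n * 'I_m}) \sum_(p : 'I_n * 'I_m)
   (if p \in T then (in_Lnat a tau T)%:R *
   (if S == T :\ p then (-1) ^+ #|[set q in T | pairlt q p]| * x p.1 p.2 else 0)
   else 0)).
  by apply: eq_bigr => T _; rewrite /koszul_raw big_distrr /= big_mkcond.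
rewrite exchange_big /=.
transitivity (\sum_(p : 'I_n * 'I_m) (if (p \notin S) && in_Lnat a tau (p |: S)
    then (-1) ^+ #|[set q in p |: S | pairlt q p]| * x p.1 p.2 else 0)).
  apply: eq_bigr => p _; rewrite (bigD1 (p |: S)) //= big1 ?addr0.
    rewrite setU11; case: (boolP (p \in S)) => pS /=.
      rewrite ifF ?mulr0 //; apply/eqP => defS.
      by move: pS; rewrite {1}defS !inE eqxx.
    rewrite setU1K // eqxx.
    by case: (in_Lnat a tau (p |: S)); rewrite ?mul1r ?mul0r.
  move=> T T_neq; case: ifP => // pT.
  case: eqP => [defS | _]; last by rewrite mulr0.
  by move: T_neq; rewrite defS setD1K ?eqxx.
under [RHS]eq_bigr do rewrite big_mkcond.
rewrite pair_bigA /=; apply: eq_bigr => [[i j]] _ /=.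
rewrite in_Lnat_setU1; case: (boolP (j \in tau)) => //= j_tau.
case: ifP => // L_ij.
have : ((i, j) \notin S) && in_Lnat a tau ((i, j) |: S) by rewrite in_Lnat_setU1 j_tau.
by case/andP => _ /in_Lnat_sign ->; rewrite ?setU11.
Qed.

(* m_l o q_l at g^(a) (x) f_rho, rho = tau u sigma: the sign eps times
   m_l (sum_{L in L_{a,tau}} e_L); the KUbasis conditions hold on L_{a,tau}. *)
Lemma koszul_qmap_raw l (a : {ffun 'I_n -> 'I_l.+1}) (rho : {set 'I_m})
    (S : {set 'I_n * 'I_m}) :
  sigma \subset rho -> #|rho :\: sigma| = l ->
  \sum_(T | is_KUbasis l T) qmap_raw (a, rho) T * koszul_raw T S
  = wedge_sign R (enum (rho :\: sigma) ++ enum sigma)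
    * \sum_T (in_Lnat (fun i => a i : nat) (rho :\: sigma) T)%:R * koszul_raw T S.
Proof.
move=> sub card_tau; rewrite big_distrr big_mkcond /=; apply: eq_bigr => T _.
rewrite /qmap_raw /= sub -mulrA; case: ifP => // not_KU.
case: (boolP (in_Lnat _ _ T)) => L_T; last by rewrite mul0r mulr0.
have [card_T col_T] := in_Lnat_shape L_T; move/negP: not_KU; case.
rewrite /is_KUbasis card_T card_tau eqxx; apply/forall_inP => p /col_T.
by rewrite in_setD => /andP [].
Qed.

Definition lower l (a : {ffun 'I_n -> 'I_l.+1}) (i : 'I_n) : {ffun 'I_n -> 'I_l.-1.+1} :=
  [ffun k => inord (a k - (k == i))].

Lemma lowerE l (a : {ffun 'I_n -> 'I_l.+1}) (i k : 'I_n) :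
  (\sum_t (a t : nat))%N = l -> (0 < a i)%N -> (lower a i k : nat) = (a k - (k == i))%N.
Proof.
move=> sum_a ai_pos; rewrite ffunE inordK //.
case: (eqVneq k i) => [-> | ki] /=.
  by have := ltn_ord (a i); lia.
have : (a k + a i <= \sum_t (a t : nat))%N.
  rewrite (bigD1 k) //= (bigD1 i) /=; last by rewrite eq_sym.
  by rewrite addnA leq_addr.
by rewrite sum_a; lia.
Qed.

Lemma lower_ENbasis l (a : {ffun 'I_n -> 'I_l.+1}) (rho : {set 'I_m}) (i : 'I_n) (j : 'I_m) :
  (\sum_t (a t : nat))%N = l -> #|rho| = (n + l)%N -> (0 < a i)%N -> j \in rho ->
  is_ENbasis (lower a i, rho :\ j).
Proof.
move=> sum_a card_rho ai_pos j_rho.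
have l_pos : (0 < l)%N.
  by rewrite -sum_a (bigD1 i) //= (leq_trans ai_pos) ?leq_addr.
apply/andP; split; apply/eqP => /=.
  rewrite (eq_bigr (fun k => (a k - (k == i))%N)) => [|k _]; last exact: lowerE.
  rewrite (bigD1 i) //= eqxx; rewrite (bigD1 i) //= in sum_a.
  rewrite (eq_bigr (fun k => (a k : nat))) => [|k /negbTE ->]; last by rewrite subn0.
  by rewrite addnBAC // sum_a subn1.
by move: card_rho; rewrite (cardsD1 j) j_rho add1n -(prednK l_pos) addnS => -[].
Qed.

(* q_{l-1} o d_{l+1} at g^(a) (x) f_rho: the only basis vector hit with the
   index (i, j) is g^(a - e_i) (x) f_{rho \ j}. *)
Lemma qmap_ENdiff_raw l (a : {ffun 'I_n -> 'I_l.+1}) (rho : {set 'I_m})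
    (S : {set 'I_n * 'I_m}) :
  (\sum_t (a t : nat))%N = l -> #|rho| = (n + l)%N ->
  \sum_(c | is_ENbasis c) ENdiff_raw (a, rho) c * qmap_raw c S
  = \sum_i \sum_(j in rho) (if (0 < a i)%N then
      (-1) ^+ #|[set r in rho | (r < j)%N]| * x i j * qmap_raw (lower a i, rho :\ j) S
     else 0).
Proof.
move=> sum_a card_rho.
under eq_bigr => c _.
  rewrite /ENdiff_raw big_distrl; under eq_bigr => i _ do rewrite big_distrl.
  over.
rewrite exchange_big; apply: eq_bigr => i _; rewrite exchange_big /=.
apply: eq_bigr => j j_rho; have [ai_pos | ] := ltnP 0 (a i); last first.
  by move=> _; apply: big1 => c _; rewrite mul0r.
rewrite (bigD1 (lower a i, rho :\ j)) /=; last exact: lower_ENbasis.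
rewrite big1 ?addr0.
  rewrite eqxx andbT ifT //; apply/forallP => k.
  by rewrite lowerE.
move=> [c1 c2] /andP [_ c_neq] /=.
case: ifP => [/andP [/forallP c1E /eqP c2E] | _]; last by rewrite mul0r.
case/eqP: c_neq; rewrite c2E; congr (_, _); apply/ffunP => k; apply: val_inj.
by rewrite /= lowerE //; apply/eqP.
Qed.

Lemma qmap_lower_sigma l (b : {ffun 'I_n -> 'I_l.+1}) (rho : {set 'I_m}) (j : 'I_m)
    (S : {set 'I_n * 'I_m}) :
  j \in sigma -> qmap_raw (b, rho :\ j) S = 0.
Proof.
move=> j_sigma; rewrite /qmap_raw /= ifF //.
by apply/negbTE/negP => /subsetP /(_ j j_sigma); rewrite !inE eqxx.
Qed.

Lemma qmap_lower l (a : {ffun 'I_n -> 'I_l.+1}) (rho : {set 'I_m}) (i : 'I_n) (j : 'I_m)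
    (S : {set 'I_n * 'I_m}) :
  (\sum_t (a t : nat))%N = l -> (0 < a i)%N -> sigma \subset rho -> j \in rho :\: sigma ->
  qmap_raw (lower a i, rho :\ j) S
  = wedge_sign R (enum ((rho :\: sigma) :\ j) ++ enum sigma)
    * (in_Lnat (fun k => (a k - (k == i))%N) ((rho :\: sigma) :\ j) S)%:R.
Proof.
move=> sum_a ai_pos sub j_tau; rewrite /qmap_raw /=.
have -> : sigma \subset rho :\ j.
  apply/subsetP => y y_sigma; rewrite !inE (subsetP sub) // andbT.
  by apply: contraTneq j_tau => <-; rewrite in_setD y_sigma.
have -> : (rho :\ j) :\: sigma = (rho :\: sigma) :\ j.
  by apply/setP => y; rewrite !inE andbCA.
have lower_eq : (fun k => lower a i k : nat) =1 (fun k => (a k - (k == i))%N).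
  by move=> k; rewrite lowerE.
by congr (_ * (nat_of_bool _)%:R); exact: in_Lnat_ext _ S lower_eq.
Qed.

Lemma commute_raw l (a : {ffun 'I_n -> 'I_l.+1}) (rho : {set 'I_m})
    (S : {set 'I_n * 'I_m}) :
  #|sigma| = n -> (\sum_t (a t : nat))%N = l -> #|rho| = (n + l)%N ->
  \sum_(T | is_KUbasis l T) qmap_raw (a, rho) T * koszul_raw T S
  = \sum_(c | is_ENbasis c) ENdiff_raw (a, rho) c * qmap_raw c S.
Proof.
move=> card_sigma sum_a card_rho.
have [sub | not_sub] := boolP (sigma \subset rho); last first.
  rewrite big1 => [|T _]; last by rewrite /qmap_raw /= (negbTE not_sub) mul0r.
  symmetry; apply: big1 => c _; rewrite /ENdiff_raw /= big_distrl; apply: big1 => i _.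
  rewrite big_distrl; apply: big1 => j _ /=.
  case: ifP => [/and3P [_ _ /eqP c2E] | _]; last by rewrite mul0r.
  rewrite /qmap_raw c2E ifF ?mulr0 //; apply: contraNF not_sub => sub.
  exact: subset_trans sub (subD1set _ _).
have card_tau : #|rho :\: sigma| = l.
  by rewrite cardsD (setIidPr sub) card_rho card_sigma; lia.
rewrite koszul_qmap_raw // koszul_Lsum qmap_ENdiff_raw // big_distrr; apply: eq_bigr => i _.
rewrite big_distrr /= big_mkcond [RHS]big_mkcond /=; apply: eq_bigr => j _.
have [j_tau | j_ntau] := boolP (j \in rho :\: sigma); last first.
  case: (boolP (j \in rho)) => //= j_rho; case: ifP => // _.
  have j_sigma : j \in sigma by move: j_ntau; rewrite in_setD j_rho andbT negbK.
  by rewrite qmap_lower_sigma // mulr0.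
have j_rho : j \in rho by move: j_tau; rewrite in_setD => /andP [].
rewrite j_rho; have [ai_pos | _] := ltnP 0 (a i); last by rewrite mulr0.
rewrite /= qmap_lower // (card_sep_subset _ sub) exprD (wedge_sign_setD1 _ _ j_tau).
case: (in_Lnat _ _ _); last by rewrite !mulr0.
by rewrite mulr1; ring.
Qed.

End Entries.

Lemma commute_entry (R : comNzRingType) (n m : nat) (x : 'I_n -> 'I_m -> R)
    (sigma : {set 'I_m}) (l : nat) (b : ENbasis n m l) (S : KUbasis n sigma l.-1) :
  #|sigma| = n ->
  \sum_(T : KUbasis n sigma l) @qmap n m R sigma l b T * @koszul n m R x sigma l T S
  = \sum_(c : ENbasis n m l.-1) @ENdiff n m R x l b c * @qmap n m R sigma l.-1 c S.
Proof.
move=> card_sigma; case: b => [[a rho] b_EN]; case: S => S S_KU.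
have /andP [/eqP sum_a /eqP card_rho] := b_EN.
transitivity (\sum_(T | is_KUbasis sigma l T) qmap_raw R sigma (a, rho) T * koszul_raw x T S).
  exact: (sum_sig _ (fun T => qmap_raw R sigma (a, rho) T * koszul_raw x T S)).
rewrite commute_raw //; symmetry.
exact: (sum_sig _ (fun c => ENdiff_raw x (a, rho) c * qmap_raw R sigma c S)).
Qed.

(* Lemma 4.12: m_l o q_l = q_{l-1} o d_{l+1}. *)
Theorem lemma4p12 (k : fieldType) (n m : nat) (sigma : {set 'I_m}) (l : nat) :
  (n <= m)%N -> #|sigma| = n -> (2 <= l)%N ->
  forall (v : ENbasis n m l -> {mpoly k[n * m]}) (S : @KUbasis n m sigma l.-1),
    lin (@koszul n m _ (@xgen k n m) sigma l)
        (lin (@qmap n m {mpoly k[n * m]} sigma l) v) S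
    = lin (@qmap n m {mpoly k[n * m]} sigma l.-1)
          (lin (@ENdiff n m _ (@xgen k n m) l) v) S.
Proof.
move=> _ card_sigma _ v S; rewrite !lin_comp /lin.
by apply: eq_bigr => b _; rewrite commute_entry.
Qed.
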